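(* For any global correlation value $r \in (0,1)$ and any recovery targets $\rho_1,\rho_2 \in [0,1]$ with $\rho_1<\rho_2$, there exist data-generating processes $P_1$ and $P_2$ for (prompt, candidate scores, oracle utilities) such that $\mathrm{Corr}_{P_1}(S,O)=\mathrm{Corr}_{P_2}(S,O)=r$, while $\mathrm{Recovery}(P_1)=\rho_1$ and $\mathrm{Recovery}(P_2)=\rho_2$.
   Context: A data-generating process draws prompts $x$ and, for each prompt, $n\ge 2$ candidates $i\in\{1,\dots,n\}$, each with a judge score $S_{x,i}\in\mathbb{R}$ and an oracle utility $O_{x,i}\in\mathbb{R}$. $\mathrm{Corr}(S,O)$ denotes the global (Pearson) correlation over all (prompt, candidate) pairs. Write $S_{x,i}=\mu^S_x+\varepsilon^S_{x,i}$ and $O_{x,i}=\mu^O_x+\varepsilon^O_{x,i}$, where $\mu^S_x,\mu^O_x$ are prompt-level means and $\varepsilon^S_{x,i},\varepsilon^O_{x,i}$ are within-prompt deviations. Selection strategies for a prompt: judge-greedy picks $\arg\max_i S_{x,i}$ (uniform random tie-breaking among tied maxima), random picks a uniformly random candidate, oracle picks $\arg\max_i O_{x,i}$. Recovery is $\mathrm{Recovery}=\dfrac{\mathbb{E}[O_{\text{judge}}]-\mathbb{E}[O_{\text{random}}]}{\mathbb{E}[O_{\text{oracle}}]-\mathbb{E}[O_{\text{random}}]}$, where $O_{\text{judge}},O_{\text{random}},O_{\text{oracle}}$ are the oracle utilities of the candidates selected by the respective strategies (assuming the denominator is positive). *)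

From HB Require Import structures.
From mathcomp Require Import all_boot all_order all_algebra.
From mathcomp Require Import reals.
Set Implicit Arguments. Unset Strict Implicit. Unset Printing Implicit Defensive.
Import Order.TTheory GRing.Theory Num.Theory.
Local Open Scope ring_scope.

(* A (finitely supported) data-generating process: prompts x : 'I_m drawn with
   probability w x; each prompt has n candidates i : 'I_n with judge score
   S x i and oracle utility O x i. *)
Record dgp (R : realType) := DGP {
  nprompt : nat;
  ncand : nat;
  pw : 'I_nprompt -> R;
  sc : 'I_nprompt -> 'I_ncand -> R;
  ou : 'I_nprompt -> 'I_ncand -> R }.
Arguments nprompt {R} d.
Arguments ncand {R} d.
Arguments pw {R} d _.
Arguments sc {R} d _ _.
Arguments ou {R} d _ _.

Section DGP.
Variables (R : realType) (P : dgp R).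

Definition dgp_valid : Prop :=
  (2 <= ncand P)%N /\ (forall x, 0 <= pw P x) /\ \sum_x pw P x = 1.

Definition Epair (f : 'I_(nprompt P) -> 'I_(ncand P) -> R) : R :=
  \sum_x pw P x * ((\sum_i f x i) / (ncand P)%:R).

Definition meanS := Epair (sc P).
Definition meanO := Epair (ou P).
Definition covSO := Epair (fun x i => (sc P x i - meanS) * (ou P x i - meanO)).
Definition varS := Epair (fun x i => (sc P x i - meanS) ^+ 2).
Definition varO := Epair (fun x i => (ou P x i - meanO) ^+ 2).
Definition corrSO := covSO / Num.sqrt (varS * varO).

Definition argmaxset (F : 'I_(nprompt P) -> 'I_(ncand P) -> R) x :
  {set 'I_(ncand P)} := [set i | [forall j, F x j <= F x i]].

(* expected oracle utility when picking argmax of F with uniform random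
   tie-breaking *)
Definition Egreedy (F : 'I_(nprompt P) -> 'I_(ncand P) -> R) : R :=
  \sum_x pw P x *
    ((\sum_(i in argmaxset F x) ou P x i) / (#|argmaxset F x|)%:R).

Definition E_judge := Egreedy (sc P).
Definition E_oracle := Egreedy (ou P).
Definition E_random := Epair (ou P).

Definition recovery := (E_judge - E_random) / (E_oracle - E_random).

End DGP.

From HB Require Import structures.
From mathcomp Require Import all_boot all_order all_algebra.
From mathcomp Require Import reals.
From mathcomp Require Import ring lra.
Set Implicit Arguments. Unset Strict Implicit. Unset Printing Implicit Defensive.
Import Order.TTheory GRing.Theory Num.Theory.
Local Open Scope ring_scope.

(* Correlation does not see how the covariance splits into a between-prompt
   part (prompt-level means) and a within-prompt part, while recovery only sees
   the within-prompt ranking.  A three-prompt process with two candidates each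
   realises recovery rho exactly; the size a of shared prompt-level means and
   the judge noise w in a prompt of constant utility are then tuned so that
   Var S = Var O and Cov(S, O) = r Var S, whatever rho is. *)

Section GreedyAverage.
Variables (R : realType) (I : finType).

Definition greedy_avg (F O : I -> R) : R :=
  (\sum_(i in [set i | [forall j, F j <= F i]]) O i) /
    (#|[set i | [forall j, F j <= F i]]|)%:R.

Lemma greedy_avg_max (F O : I -> R) (i0 : I) :
  (forall j, F j <= F i0) -> (forall i, F i0 <= F i -> O i = O i0) ->
  greedy_avg F O = O i0.
Proof.
move=> i0_max O_eq; rewrite /greedy_avg.
set A := [set i | _].
have i0A : i0 \in A by rewrite inE; apply/forallP.
have -> : \sum_(i in A) O i = \sum_(i in A) O i0.
  by apply: eq_bigr => i; rewrite inE => /forallP/(_ i0)/O_eq.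
rewrite sumr_const -[O i0 *+ _]mulr_natr mulfK // pnatr_eq0 -lt0n.
by apply/card_gt0P; exists i0.
Qed.

Lemma greedy_avg_const (F O : I -> R) (c : R) :
  (forall i, F i = c) -> greedy_avg F O = (\sum_i O i) / #|I|%:R.
Proof.
move=> F_const; rewrite /greedy_avg.
have -> : [set i | [forall j, F j <= F i]] = [set: I].
  by apply/setP => i; rewrite !inE; apply/forallP => j; rewrite !F_const.
by rewrite cardsT; congr (_ / _); apply: eq_bigl => i; rewrite inE.
Qed.

End GreedyAverage.

Lemma EgreedyE (R : realType) (P : dgp R)
    (F : 'I_(nprompt P) -> 'I_(ncand P) -> R) :
  Egreedy F = \sum_x pw P x * greedy_avg (F x) (ou P x).
Proof. by []. Qed.

Lemma corrSO_eq (R : realType) (P : dgp R) (v r : R) :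
  0 < v -> varS P = v -> varO P = v -> covSO P = r * v -> corrSO P = r.
Proof.
move=> v_gt0 vS vO cov; rewrite /corrSO vS vO cov -expr2 sqrtr_sqr gtr0_norm //.
by rewrite mulfK // gt_eqF.
Qed.

Section Example.
Variable R : realType.

Definition pick2 {T : Type} (u v : T) (i : 'I_2) : T :=
  if nat_of_ord i is 0%N then u else v.
Definition pick3 {T : Type} (u v t : T) (k : 'I_3) : T :=
  match nat_of_ord k with 0%N => u | 1%N => v | _ => t end.

(* Prompts 0 and 1 carry the prompt-level means a and -a in both S and O.
   Within prompt 0 the judge ranks the candidates correctly (oracle gap 2 rho),
   within prompt 1 it ties them (oracle gap 2 (1 - rho)), and in prompt 2 it
   separates candidates of equal utility. *)
Definition example_dgp (a w x rho : R) : dgp R :=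
  @DGP R 3 2 (pick3 (1/4) (1/4) (1/2))
    (pick3 (pick2 (a + x) (a - x)) (pick2 (- a) (- a)) (pick2 w (- w)))
    (pick3 (pick2 (a + rho) (a - rho))
           (pick2 (- a + (1 - rho)) (- a - (1 - rho))) (pick2 0 0)).

Lemma example_dgp_valid a w x rho : dgp_valid (example_dgp a w x rho).
Proof.
split=> //; split.
  by move=> [[|[|[|//]]] ?]; rewrite /= /pick3 /=; lra.
by rewrite /= !big_ord_recl big_ord0 /pick3 /=; field.
Qed.

Variables (a w x rho : R).
Let P := example_dgp a w x rho.

Ltac expand := rewrite /Epair !big_ord_recl !big_ord0 /= /pick3 /pick2 /=.

Lemma meanS_example : meanS P = 0.
Proof. by rewrite /meanS; expand; field. Qed.

Lemma meanO_example : meanO P = 0.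
Proof. by rewrite /meanO; expand; field. Qed.

Lemma varS_example : varS P = a ^+ 2 / 2 + x ^+ 2 / 4 + w ^+ 2 / 2.
Proof. by rewrite /varS meanS_example; expand; field. Qed.

Lemma varO_example : varO P = a ^+ 2 / 2 + (rho ^+ 2 + (1 - rho) ^+ 2) / 4.
Proof. by rewrite /varO meanO_example; expand; field. Qed.

Lemma covSO_example : covSO P = a ^+ 2 / 2 + x * rho / 4.
Proof. by rewrite /covSO meanS_example meanO_example; expand; field. Qed.

Lemma greedy_avg_pick2_first (u u' v v' : R) :
  u' <= u -> (u' = u -> v' = v) -> greedy_avg (pick2 u u') (pick2 v v') = v.
Proof.
move=> le_u'u tie; apply: (greedy_avg_max (i0 := ord0)).
  by case=> [[|[|//]] ?].
by case=> [[|[|//]] ?] //= le_uu'; apply/tie/le_anti; rewrite le_u'u.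
Qed.

Lemma greedy_avg_pick2_tie (u v v' : R) :
  greedy_avg (pick2 u u) (pick2 v v') = (v + v') / 2.
Proof.
rewrite (@greedy_avg_const _ _ _ _ u); last by case=> [[|[|//]] ?].
by rewrite card_ord !big_ord_recl big_ord0 addr0.
Qed.

Lemma recovery_example : 0 < x -> 0 <= w -> 0 <= rho <= 1 ->
  E_oracle P - E_random P = 1 / 4 /\ recovery P = rho.
Proof.
move=> x_gt0 w_ge0 /andP[rho_ge0 rho_le1].
have oracle : E_oracle P = 1 / 4.
  rewrite /E_oracle EgreedyE !big_ord_recl big_ord0 /= /pick3 /=.
  by rewrite !greedy_avg_pick2_first //= => *; lra.
have judge : E_judge P = rho / 4.
  rewrite /E_judge EgreedyE !big_ord_recl big_ord0 /= /pick3 /=.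
  by rewrite greedy_avg_pick2_tie !greedy_avg_pick2_first //= => *; lra.
rewrite /recovery oracle judge /E_random -/(meanO P) meanO_example.
by split; [rewrite subr0 | field].
Qed.

End Example.

Lemma exists_dgp_corr_recovery (R : realType) (r rho : R) :
  0 < r < 1 -> 0 <= rho <= 1 ->
  exists P : dgp R, dgp_valid P /\ (0 < varS P /\ 0 < varO P) /\
    0 < E_oracle P - E_random P /\ corrSO P = r /\ recovery P = rho.
Proof.
move=> /andP[r_gt0 r_lt1] rho01; have /andP[rho_ge0 rho_le1] := rho01.
set Q := rho ^+ 2 + (1 - rho) ^+ 2.
set x := r / 2.
(* W and A solve Var S = Var O and Cov(S, O) = r Var O for w ^+ 2 and a ^+ 2 *)
set W := (Q - x ^+ 2) / 2.
set A := r * (2 * Q - rho) / (4 * (1 - r)).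
have Q_ge : 1 / 2 <= Q.
  by rewrite /Q; have := sqr_ge0 (2 * rho - 1); rewrite !expr2; nra.
have W_ge0 : 0 <= W by rewrite /W /x; apply: divr_ge0 => //; nra.
have A_ge0 : 0 <= A by rewrite /A; apply: divr_ge0; nra.
set w := Num.sqrt W; set a := Num.sqrt A.
have w2 : w ^+ 2 = W by rewrite sqr_sqrtr.
have a2 : a ^+ 2 = A by rewrite sqr_sqrtr.
set P := example_dgp a w x rho.
have x_gt0 : 0 < x by rewrite /x; lra.
have [gap rec] := @recovery_example R a w x rho x_gt0 (sqrtr_ge0 W) rho01.
have vS : varS P = A / 2 + Q / 4 by rewrite varS_example w2 a2 /W; field.
have vO : varO P = A / 2 + Q / 4 by rewrite varO_example a2.
have cov : covSO P = r * (A / 2 + Q / 4).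
  by rewrite covSO_example a2 /A /x; field; rewrite subr_eq0 gt_eqF.
have v_gt0 : 0 < A / 2 + Q / 4 by lra.
exists P; split; first exact: example_dgp_valid.
rewrite vS vO gap; split; first by split.
split; first lra.
by split; first exact: corrSO_eq vS vO cov.
Qed.

Theorem mainTheorem1 (R : realType) (r rho1 rho2 : R) :
  0 < r < 1 -> 0 <= rho1 -> rho1 < rho2 -> rho2 <= 1 ->
  exists P1 P2 : dgp R,
    (dgp_valid P1 /\ dgp_valid P2) /\
    (0 < varS P1 /\ 0 < varO P1 /\ 0 < varS P2 /\ 0 < varO P2) /\
    (0 < E_oracle P1 - E_random P1 /\ 0 < E_oracle P2 - E_random P2) /\
    (corrSO P1 = r /\ corrSO P2 = r) /\
    (recovery P1 = rho1 /\ recovery P2 = rho2).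
Proof.
move=> r01 rho1_ge0 lt_rho12 rho2_le1.
have rho1_01 : 0 <= rho1 <= 1 by apply/andP; split; lra.
have rho2_01 : 0 <= rho2 <= 1 by apply/andP; split; lra.
have [P1 [v1 [[s1 o1] [e1 [c1 rc1]]]]] := exists_dgp_corr_recovery r01 rho1_01.
have [P2 [v2 [[s2 o2] [e2 [c2 rc2]]]]] := exists_dgp_corr_recovery r01 rho2_01.
by exists P1, P2.
Qed.
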